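(* Let $Gr_n$ be the grid graph with vertex set $\{0,\dots,2^n\}^2$, edges between vertices at $\ell_1$-distance 1, and the $\ell_1$-metric. For any $A\subseteq V(Gr_n)$ with $A\ne\emptyset$ and $A^c\ne\emptyset$, we have $\min\{\mathrm{diam}(A),\mathrm{diam}(A^c)\}\le2\,\mathrm{diam}(\partial_VA)$.
   Context: $A^c=V(Gr_n)\setminus A$. The symmetric vertex boundary $\partial_VA$ is the set of all endpoints of edges having one endpoint in $A$ and the other in $A^c$. diam is with respect to the $\ell_1$-metric. *)

From mathcomp Require Import all_boot.
Set Implicit Arguments. Unset Strict Implicit. Unset Printing Implicit Defensive.

Definition vert (n : nat) : finType := ('I_(2 ^ n).+1 * 'I_(2 ^ n).+1)%type.

Definition adist (a b : nat) : nat := (a - b) + (b - a).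

Definition l1 (n : nat) (x y : vert n) : nat :=
  adist x.1 y.1 + adist x.2 y.2.

Definition gadj (n : nat) (x y : vert n) : bool := l1 x y == 1.

(* diameter w.r.t. l1 metric (0 for the empty set) *)
Definition diam (n : nat) (A : {set vert n}) : nat :=
  \max_(x in A) \max_(y in A) l1 x y.

(* symmetric vertex boundary: all endpoints of edges with one endpoint in A
   and the other in A^c *)
Definition vbound (n : nat) (A : {set vert n}) : {set vert n} :=
  [set x | [exists y, gadj x y && ((x \in A) != (y \in A))]].

(* Call a point x mixed in a direction if the grid line through x in that
   direction meets both A and A^c.  Along such a line some edge leaves A, so the
   line meets the boundary; two boundary points on the rows (columns) of x and y
   are at least as far apart as these rows (columns).  Hence if every point of A,
   or every point of A^c, is mixed in both directions, that set has diameter at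
   most 2 diam(∂A).  Otherwise some a in A and some c in A^c lie on
   monochromatic lines.  These lines cannot be perpendicular, since they would
   meet; if they are parallel, every perpendicular line crosses the boundary, and
   the two extreme ones give diam(∂A) >= 2^n, while every diameter is at most
   2 * 2^n. *)

From mathcomp Require Import all_boot zify.

Lemma exists_switch (f : nat -> bool) i j :
  i <= j -> f i != f j -> exists2 k, i <= k < j & f k != f k.+1.
Proof.
elim: j => [|j IHj]; first by rewrite leqn0 => /eqP ->; rewrite eqxx.
rewrite leq_eqVlt => /predU1P [-> | /ltnSE le_ij]; first by rewrite eqxx.
have [fj fij | fj _] := eqVneq (f j) (f j.+1); last by exists j; rewrite ?le_ij ?ltnSn.
have [|k /andP [ik kj] fk] := IHj le_ij; first by rewrite fj.
by exists k; rewrite // ik ltnS ltnW.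
Qed.

Section Grid.

Context {n : nat}.
Implicit Types (A S : {set vert n}) (x y : vert n) (b : bool).

Lemma diam_le S k : (forall x y, x \in S -> y \in S -> l1 x y <= k) -> diam S <= k.
Proof.
by move=> le_xy; apply/bigmax_leqP => x xS; apply/bigmax_leqP => y yS; apply: le_xy.
Qed.

Lemma l1_le_diam {S x y} : x \in S -> y \in S -> l1 x y <= diam S.
Proof.
by move=> xS yS; apply: leq_trans (leq_bigmax_cond _ xS); apply: leq_bigmax_cond yS.
Qed.

Lemma diam_le_grid S : diam S <= 2 * 2 ^ n.
Proof.
apply: diam_le => x y _ _; rewrite /l1 /adist.
by have := ltn_ord x.1; have := ltn_ord x.2; have := ltn_ord y.1; have := ltn_ord y.2; lia.
Qed.

(* [line true r] is the row with second coordinate [r], [line false r] the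
   column with first coordinate [r]. *)
Definition line b (r i : 'I_(2 ^ n).+1) : vert n := if b then (i, r) else (r, i).
Definition across b x := if b then x.2 else x.1.
Definition along b x := if b then x.1 else x.2.

Lemma line_through b x : line b (across b x) (along b x) = x.
Proof. by case: b; case: x. Qed.

Lemma line_transpose b r i : line b r i = line (~~ b) i r.
Proof. by case: b. Qed.

Lemma gadj_line b r (i j : 'I_(2 ^ n).+1) :
  j = i.+1 :> nat -> gadj (line b r i) (line b r j).
Proof. by move=> ji; case: b; rewrite /gadj /l1 /adist /= ji subnn; apply/eqP; lia. Qed.

Lemma line_meets_vbound A b r (i j : 'I_(2 ^ n).+1) :
  (line b r i \in A) != (line b r j \in A) -> exists k, line b r k \in vbound A.
Proof.
wlog le_ij : i j / i <= j.
  by move=> gen; case: (leqP i j) => [|/ltnW] /gen //; rewrite eq_sym.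
move=> ij; pose f k := line b r (inord k) \in A.
have [|k /andP [ik kj] fk] := @exists_switch f i j le_ij; first by rewrite /f !inord_val.
have kN : k < (2 ^ n).+1 by apply: leq_trans (ltnW kj) (ltn_ord j).
have k1N : k.+1 < (2 ^ n).+1 by apply: leq_ltn_trans kj (ltn_ord j).
exists (inord k); rewrite inE; apply/existsP; exists (line b r (inord k.+1)).
by rewrite gadj_line ?fk // !inordK.
Qed.

Definition mixed A b x := [exists i, (line b (across b x) i \in A) != (x \in A)].

Lemma unmixed_line A b x :
  ~~ mixed A b x -> forall i, (line b (across b x) i \in A) = (x \in A).
Proof. by move=> /existsPn unmix i; apply/eqP/negbNE/unmix. Qed.

Lemma mixed_across_le {A b x y} :
  mixed A b x -> mixed A b y -> adist (across b x) (across b y) <= diam (vbound A).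
Proof.
have meet z : mixed A b z -> exists k, line b (across b z) k \in vbound A.
  case/existsP => i; rewrite -{2}(line_through b z); exact: line_meets_vbound.
move=> /meet [k xB] /meet [l yB]; apply: leq_trans _ (l1_le_diam xB yB).
by case: b {meet xB yB}; rewrite /l1 ?leq_addl ?leq_addr.
Qed.

Lemma diam_le_vbound {A S} :
  {in S, forall x, mixed A true x && mixed A false x} -> diam S <= 2 * diam (vbound A).
Proof.
move=> mixS; apply: diam_le => x y /mixS /andP [xr xc] /mixS /andP [yr yc].
rewrite mul2n -addnn /l1 addnC.
by apply: leq_add; [have := mixed_across_le xr yr | have := mixed_across_le xc yc].
Qed.

Lemma unmixed_perpendicular {A b x y} :
  ~~ mixed A b x -> ~~ mixed A (~~ b) y -> (x \in A) = (y \in A).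
Proof.
move=> /unmixed_line xA /unmixed_line yA.
by rewrite -(xA (across (~~ b) y)) -(yA (across b x)) line_transpose.
Qed.

Lemma unmixed_parallel {A b x y} :
  ~~ mixed A b x -> ~~ mixed A b y -> (x \in A) != (y \in A) -> 2 ^ n <= diam (vbound A).
Proof.
move=> /unmixed_line xA /unmixed_line yA xy.
have meet r : exists k, line (~~ b) r k \in vbound A.
  apply: (@line_meets_vbound A _ r (across b x) (across b y)).
  by rewrite -!line_transpose xA yA.
have [[k kB] [l lB]] := (meet ord0, meet ord_max).
apply: leq_trans _ (l1_le_diam kB lB).
by case: b {xA yA meet kB lB}; rewrite /l1 /adist /=; lia.
Qed.

Lemma unmixed_vbound_wide {A ba bc x y} :
  ~~ mixed A ba x -> ~~ mixed A bc y -> (x \in A) != (y \in A) -> 2 ^ n <= diam (vbound A).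
Proof.
move=> ux; case: (eqVneq bc ba) => [-> | /negPf bc_ba] uy xy.
  exact: unmixed_parallel ux uy xy.
have bcE : bc = ~~ ba by case: ba bc bc_ba {ux uy} => -[].
by rewrite bcE in uy; rewrite (unmixed_perpendicular ux uy) eqxx in xy.
Qed.

End Grid.

Theorem lemma3p6 (n : nat) (A : {set vert n}) :
  A != set0 -> ~: A != set0 ->
  minn (diam A) (diam (~: A)) <= 2 * diam (vbound A).
Proof.
move=> _ _.
have [/forall_inP mixA | /forall_inPn [a aA /nandP unmix_a]] :=
  boolP [forall x in A, mixed A true x && mixed A false x].
  exact: leq_trans (geq_minl _ _) (diam_le_vbound mixA).
have [/forall_inP mixAc | /forall_inPn [c cAc /nandP unmix_c]] :=
  boolP [forall x in ~: A, mixed A true x && mixed A false x].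
  exact: leq_trans (geq_minr _ _) (diam_le_vbound mixAc).
suff wide : 2 ^ n <= diam (vbound A).
  by apply: leq_trans (geq_minl _ _) _; apply: leq_trans (diam_le_grid _) _; lia.
have ac : (a \in A) != (c \in A) by rewrite aA; rewrite inE in cAc.
have [ba ua] : exists ba, ~~ mixed A ba a by case: unmix_a => ?; eexists; eassumption.
have [bc uc] : exists bc, ~~ mixed A bc c by case: unmix_c => ?; eexists; eassumption.
exact: unmixed_vbound_wide ua uc ac.
Qed.
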